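(* Let $(W,S)$ be a Coxeter group with $W$ finite, and let $\mathfrak o$ be an orientation of $(W,S)$. Then $\mathfrak o=\mathfrak o_w$ for some $w\in W$.
   Context: $\ell$ is the length function of $(W,S)$ and $m(s,t)$ the order of $st$. An orientation of $(W,S)$ is a map $\mathfrak o:W\times S\to\{\pm1\}$ such that (OR1) $\mathfrak o(ws,s)=-\mathfrak o(w,s)$ for all $w\in W,s\in S$; and (OR2) whenever $s,t\in S$ with $m=m(s,t)<\infty$ and $w\in W$, the two sequences $(\mathfrak o(w,s),\mathfrak o(ws,t),\mathfrak o(wst,s),\dots)$ and $(\mathfrak o(w,t),\mathfrak o(wt,s),\mathfrak o(wts,t),\dots)$, each of length $m$, are for some $0\le k\le m$ either of the form $(+,\dots,+,-,\dots,-)$ ($k$ plus signs then $m-k$ minus signs) and $(-,\dots,-,+,\dots,+)$ ($m-k$ minus then $k$ plus), or of the form $(-,\dots,-,+,\dots,+)$ ($k$ minus then $m-k$ plus) and $(+,\dots,+,-,\dots,-)$ ($m-k$ plus then $k$ minus). For $w_0\in W$, the orientation towards $w_0$ is $\mathfrak o_{w_0}(w,s)=+1$ if $\ell(w_0^{-1}ws)<\ell(w_0^{-1}w)$ and $-1$ if $\ell(w_0^{-1}ws)>\ell(w_0^{-1}w)$. *)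

From mathcomp Require Import all_boot all_order all_fingroup.
Set Implicit Arguments.
Unset Strict Implicit.
Unset Printing Implicit Defensive.
Local Open Scope group_scope.

Definition is_group (H : Type) (mul : H -> H -> H) (one : H) (inv : H -> H) :=
  [/\ forall x y z, mul x (mul y z) = mul (mul x y) z,
      forall x, mul one x = x, forall x, mul x one = x,
      forall x, mul (inv x) x = one & forall x, mul x (inv x) = one].

Fixpoint hpow (H : Type) (mul : H -> H -> H) (one : H) (x : H) (n : nat) : H :=
  if n is n'.+1 then mul x (hpow mul one x n') else one.

(* (W,S) is a Coxeter system, W = gT finite: S generates W, consists of
   involutions, and W has the presentation
   < S | s^2 = 1, (st)^{m(s,t)} = 1 >  with m(s,t) the order of st,
   expressed by the universal property of the presentation w.r.t. all groups. *)
Definition coxeter_system (gT : finGroupType) (S : {set gT}) : Prop :=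
  [/\ <<S>> = [set: gT],
      {in S, forall s, s != 1 /\ s * s = 1} &
      forall (H : Type) (mul : H -> H -> H) (one : H) (inv : H -> H)
             (f : gT -> H),
        is_group mul one inv ->
        {in S, forall s, mul (f s) (f s) = one} ->
        {in S &, forall s t, hpow mul one (mul (f s) (f t)) #[s * t] = one} ->
        exists phi : gT -> H,
          (forall x y, phi (x * y) = mul (phi x) (phi y)) /\
          {in S, forall s, phi s = f s}].

Definition word_of_len (gT : finGroupType) (S : {set gT}) (w : gT) (n : nat)
  : bool :=
  [exists t : n.-tuple gT, all (mem S) t && (\prod_(x <- t) x == w)].

(* length function of (W,S): the least n such that w is a product of n
   elements of S (searched in 0..#|W|, which suffices when S generates W). *)
Definition coxlen (gT : finGroupType) (S : {set gT}) (w : gT) : nat :=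
  find (word_of_len S w) (iota 0 #|gT|.+1).

Fixpoint alt (gT : finGroupType) (s t : gT) (i : nat) : gT :=
  if i is i'.+1 then alt s t i' * (if odd i' then t else s) else 1.

(* Orientations: o w s = true encodes +1 and false encodes -1. *)
Definition is_orientation (gT : finGroupType) (S : {set gT})
  (o : gT -> gT -> bool) : Prop :=
  (forall w, {in S, forall s, o (w * s) s = ~~ o w s}) /\
  (forall s t w, s \in S -> t \in S ->
     let m := #[s * t] in
     let A i := o (w * alt s t i) (if odd i then t else s) in
     let B i := o (w * alt t s i) (if odd i then s else t) in
     exists2 k, k <= m &
       (forall i, i < m -> A i = (i < k) /\ B i = (m - k <= i)) \/
       (forall i, i < m -> A i = (k <= i) /\ B i = (i < m - k))).

Definition orient_to (gT : finGroupType) (S : {set gT}) (w0 : gT)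
  (w s : gT) : bool :=
  coxlen S (w0^-1 * w * s) < coxlen S (w0^-1 * w).

From mathcomp Require Import all_boot all_order all_fingroup all_algebra.
From mathcomp Require Import cyclic zify.
(* Read an orientation as a +-1 labelling of the edges (w, ws) of the Cayley
   graph.  By (OR1) and (OR2) it sums to zero around each rank-2 cycle, so it
   has a potential h with h (w s) = h w -+ 1, and a minimum w0 of h is a sink.
   The same potential argument, applied to the wall w s w^-1 crossed by each
   edge, yields the parity par r w of the number of crossings of the
   reflection r by a path from 1 to w; by a deletion argument o_{w0} (w, s) is
   +1 exactly when the wall of (w, s) separates w from w0.  That o has the
   same description follows by induction on the distance from w0: in the
   residue y <s, t> the element p nearest to w0 is a sink of the residue (by
   induction), (OR2) forces o on the residue to point towards p, and no wall
   through the residue separates p from w0. *)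

Set Implicit Arguments.
Unset Strict Implicit.
Unset Printing Implicit Defensive.
Local Open Scope group_scope.
Import GRing.Theory.

Local Notation letter s t i := (if odd i then t else s).

Lemma invg_involution (gT : finGroupType) (s : gT) : s * s = 1 -> s^-1 = s.
Proof. by move=> ss1; apply/eqP; rewrite eq_invg_mul ss1. Qed.

Lemma coxeter_invol (gT : finGroupType) (S : {set gT}) :
  coxeter_system S -> {in S, forall s, s * s = 1}.
Proof. by case=> _ S_invol _ s /S_invol []. Qed.

Section AlternatingWords.

Variables (gT : finGroupType) (s t : gT).

Lemma alt_double n : alt s t n.*2 = (s * t) ^+ n.
Proof. by elim: n => // n IH; rewrite doubleS /= odd_double /= IH expgSr mulgA. Qed.

Lemma alt_double_add n k : alt s t (n.*2 + k) = (s * t) ^+ n * alt s t k.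
Proof.
elim: k => [|k IH]; first by rewrite addn0 alt_double mulg1.
by rewrite addnS /= IH oddD odd_double mulgA.
Qed.

Lemma alt_double_addS k : alt s t k.+2 = s * t * alt s t k.
Proof. exact: (alt_double_add 1 k). Qed.

Lemma letter_add_rev m i : i < m -> letter s t (m + i) = letter t s (m.-1 - i).
Proof.
move=> lt_i; have -> : m + i = (m.-1 - i).+1 + i.*2 by rewrite -addnn; lia.
by rewrite oddD odd_double addbF /=; case: odd.
Qed.

Hypotheses (ss1 : s * s = 1) (tt1 : t * t = 1).

Lemma letter_invg i : (letter s t i)^-1 = letter s t i.
Proof. by case: odd; apply: invg_involution. Qed.

Lemma alt_conj_letter j :
  alt s t j * letter s t j * (alt s t j)^-1 = (s * t) ^+ j * s.
Proof.
elim: j => [|j IH]; first by rewrite /= invg1 !mul1g mulg1.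
rewrite expgS -[RHS]mulgA -IH [alt s t j.+1]/= invMg letter_invg !mulgA.
by rewrite -alt_double_addS.
Qed.

Lemma alt_rev m i : (s * t) ^+ m = 1 -> i <= m.*2 ->
  alt t s i = alt s t (m.*2 - i).
Proof.
move=> stm; elim: i => [|i IH] lei; first by rewrite subn0 alt_double.
rewrite [alt t s i.+1]/= IH 1?ltnW // -[m.*2 - i](@subnSK _ m.*2) //=.
rewrite oddB // odd_double /=.
by case: (odd i); rewrite -mulgA ?ss1 ?tt1 mulg1.
Qed.

Lemma alt_add_rev m i : (s * t) ^+ m = 1 -> i < m ->
  alt s t (m + i) = alt t s (m.-1 - i) * letter t s (m.-1 - i).
Proof.
move=> stm lt_i; rewrite -[RHS]/(alt t s (m.-1 - i).+1) (alt_rev stm); last first.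
  by rewrite -addnn; lia.
by congr alt; rewrite -addnn; lia.
Qed.

Lemma alt_mod j : alt s t j = alt s t (j %% (#[s * t]).*2).
Proof.
rewrite {1}(divn_eq j (#[s * t]).*2) -muln2 mulnA muln2 alt_double_add.
by rewrite mulnC expgM expg_order expg1n mul1g.
Qed.

Lemma alt_mul_next_letter j :
  alt s t j * letter s t j.+1 = alt s t ((#[s * t].-1).*2 + j.+1).
Proof.
have Ej : (#[s * t]).*2 + j = ((#[s * t].-1).*2 + j.+1).+1.
  by rewrite addnS -!addSn -doubleS prednK ?order_gt0.
rewrite -[alt s t j]mul1g -(expg_order (s * t)) -alt_double_add Ej /=.
rewrite oddD odd_double /=.
by case: (odd j); rewrite /= -mulgA ?ss1 ?tt1 mulg1.
Qed.

Lemma alt_mul_gen j u : u \in [set s; t] -> exists k, alt s t j * u = alt s t k.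
Proof.
case: (eqVneq u (letter s t j)) => [->|u_next]; first by exists j.+1.
move=> st_u; exists ((#[s * t].-1).*2 + j.+1); rewrite -alt_mul_next_letter.
congr (_ * _); rewrite /=; move: u_next.
by case/set2P: st_u => ->; case: (odd j); rewrite ?eqxx.
Qed.

Lemma mem_gen2_alt x : x \in <<[set s; t]>> ->
  exists2 j, j < (#[s * t]).*2 & x = alt s t j.
Proof.
case/gen_prodgP => n [c st_c ->].
suff [j ->] : exists j, \prod_(i < n) c i = alt s t j.
  by exists (j %% (#[s * t]).*2); rewrite ?ltn_pmod ?double_gt0 ?order_gt0 -?alt_mod.
elim: n c st_c => [|n IH] c st_c; first by exists 0; rewrite big_ord0.
rewrite big_ord_recr /=.
have [j ->] := IH (fun i => c (widen_ord (leqnSn n) i)) (fun i => st_c _).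
exact: alt_mul_gen.
Qed.

End AlternatingWords.

Section Length.

Variables (gT : finGroupType) (S : {set gT}).

Lemma word_of_lenP w n :
  reflect (exists l, [/\ all (mem S) l, \prod_(x <- l) x = w & size l = n])
          (word_of_len S w n).
Proof.
apply: (iffP existsP) => [[u /andP [Su /eqP <-]] | [l [Sl <- <-]]].
  by exists u; rewrite size_tuple.
by exists (in_tuple l); rewrite Sl eqxx.
Qed.

Lemma shortest_word_size_lt l : all (mem S) l ->
  (forall l', all (mem S) l' -> \prod_(x <- l') x = \prod_(x <- l) x ->
     size l <= size l') ->
  size l < #|gT|.
Proof.
move=> Sl l_min; pose prefix (i : 'I_(size l).+1) := \prod_(x <- take i l) x.
suff /leq_card : injective prefix by rewrite card_ord.
have prefix_neq (i j : 'I_(size l).+1) : i < j -> prefix i != prefix j.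
  move=> lt_ij; apply/eqP; rewrite /prefix => eq_ij; have le_j := ltn_ord j.
  have Sl' : all (mem S) (take i l ++ drop j l).
    rewrite all_cat; apply/andP; split; apply/allP => y y_in; apply: (allP Sl).
      exact: mem_take y_in.
    exact: mem_drop y_in.
  have := l_min _ Sl'; rewrite big_cat /= eq_ij -big_cat cat_take_drop.
  rewrite size_cat size_drop size_takel ?(leq_trans (ltnW lt_ij)) //.
  by move: lt_ij le_j => /= + + /(_ erefl); move: (val i) (val j) => a b; lia.
move=> i j eq_ij; apply/val_inj; case: (ltngtP i j) => // lt_ij.
  by have := prefix_neq _ _ lt_ij; rewrite eq_ij eqxx.
by have := prefix_neq _ _ lt_ij; rewrite eq_ij eqxx.
Qed.

Lemma coxlen_le l : all (mem S) l -> coxlen S (\prod_(x <- l) x) <= size l.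
Proof.
move=> Sl; case: (leqP (size l) #|gT|) => [le_l | lt_l]; last first.
  by apply: leq_trans (find_size _ _) _; rewrite size_iota.
rewrite leqNgt; apply/negP => /(before_find 0).
rewrite nth_iota ?add0n ?ltnS // => /negbT/negP; apply.
by apply/word_of_lenP; exists l.
Qed.

Hypothesis genS : <<S>> = [set: gT].

Lemma exists_word x : exists l, all (mem S) l /\ \prod_(y <- l) y = x.
Proof.
have : x \in <<S>> by rewrite genS inE.
case/gen_prodgP => n [c Sc ->]; exists [seq c i | i <- enum 'I_n].
split; first by apply/allP => _ /mapP [i _ ->]; apply: Sc.
by rewrite big_map enumT.
Qed.

Lemma coxlen_word x :
  exists l, [/\ all (mem S) l, \prod_(y <- l) y = x & size l = coxlen S x].
Proof.
have ex_len : exists n, word_of_len S x n.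
  by have [l [Sl <-]] := exists_word x; exists (size l); apply/word_of_lenP; exists l.
case: (ex_minnP ex_len) => n /word_of_lenP [l [Sl l_x <-]] l_min.
have lt_l : size l < #|gT|.
  apply: shortest_word_size_lt => // l' Sl' l'_l; apply: l_min.
  by apply/word_of_lenP; exists l'; rewrite l'_l l_x.
have has_len : has (word_of_len S x) (iota 0 #|gT|.+1).
  apply/hasP; exists (size l); first by rewrite mem_iota leq0n add0n ltnS ltnW.
  by apply/word_of_lenP; exists l.
apply/word_of_lenP; move: (nth_find 0 has_len); rewrite nth_iota //.
by move: has_len; rewrite has_find size_iota.
Qed.

Hypothesis S_invol : {in S, forall s, s * s = 1}.

Lemma coxlen_descent x : x != 1 ->
  exists2 t, t \in S & coxlen S (x * t) < coxlen S x.
Proof.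
move=> x_ne1; have [l [Sl l_x <-]] := coxlen_word x.
case/lastP: l Sl l_x => [|l t]; first by rewrite big_nil => _ x1; rewrite -x1 eqxx in x_ne1.
rewrite all_rcons big_rcons => /andP [St Sl] <-; exists t => //.
by rewrite -mulgA S_invol // mulg1 size_rcons ltnS coxlen_le.
Qed.

End Length.

Section Potential.

Variables (gT : finGroupType) (V : zmodType).

Definition twisted_mul (x y : gT * {ffun gT -> V}) : gT * {ffun gT -> V} :=
  (x.1 * y.1, [ffun w => x.2 w + y.2 (w * x.1)%g]%R).

Definition twisted_one : gT * {ffun gT -> V} := (1, [ffun=> 0%R]).

Definition twisted_inv (x : gT * {ffun gT -> V}) : gT * {ffun gT -> V} :=
  (x.1^-1, [ffun w => - x.2 (w * x.1^-1)%g]%R).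

Lemma twisted_is_group : is_group twisted_mul twisted_one twisted_inv.
Proof.
split=> [[x1 x2] [y1 y2] [z1 z2] | [x1 x2] | [x1 x2] | [x1 x2] | [x1 x2]];
  congr pair; rewrite /= ?mulgA ?mul1g ?mulg1 ?mulVg ?mulgV //;
  apply/ffunP => w; rewrite !ffunE ?mulgA ?mulg1 ?mulgK.
- by rewrite addrA.
- by rewrite add0r.
- by rewrite addr0.
- by rewrite addNr.
- by rewrite addrN.
Qed.

Variable d : gT -> gT -> V.

Definition twisted_gen (s : gT) := (s, [ffun w => d w s]).

Lemma hpow_twisted_gen s t n :
  hpow twisted_mul twisted_one (twisted_mul (twisted_gen s) (twisted_gen t)) n =
  ((s * t) ^+ n,
   [ffun w => \sum_(j < n.*2) d (w * alt s t j)%g (letter s t j)]%R).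
Proof.
elim: n => [|n IH]; first by congr pair; apply/ffunP => w; rewrite !ffunE big_ord0.
rewrite [LHS]/= IH /twisted_mul /=; congr pair; first by rewrite expgS.
apply/ffunP => w; rewrite !ffunE doubleS !big_ord_recl /= !mul1g mulg1 addrA.
congr (_ + _)%R; apply: eq_bigr => i _; rewrite add0n negbK.
by rewrite -mulgA -alt_double_addS.
Qed.

Variable S : {set gT}.
Hypotheses (cox : coxeter_system S)
  (d_flip : forall w, {in S, forall s, d (w * s)%g s = - d w s}%R)
  (d_cycle : forall w, {in S &, forall s t,
     \sum_(j < (#[s * t]).*2) d (w * alt s t j)%g (letter s t j) = 0}%R).

(* The map s |-> (s, d(., s)) respects the Coxeter relations, so it extends to
   a homomorphism into the twisted product; its first component is the
   identity, and its second component evaluated at 1 is the potential. *)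
Lemma coxeter_potential :
  exists P : gT -> V, forall w, {in S, forall s, P (w * s)%g = P w + d w s}%R.
Proof.
have [genS _ lift_hom] := cox.
have [||phi [phiM phiS]] := lift_hom _ _ _ _ twisted_gen twisted_is_group.
- move=> s Ss; congr pair; first exact: (coxeter_invol cox Ss).
  by apply/ffunP => w; rewrite !ffunE d_flip // addrN.
- move=> s t Ss St; rewrite hpow_twisted_gen expg_order; congr pair.
  by apply/ffunP => w; rewrite !ffunE d_cycle.
have phi1 x : (phi x).1 = x.
  have : x \in <<S>> by rewrite genS inE.
  case/gen_prodgP => n [c Sc ->]; elim: n c Sc => [|n IH] c Sc.
    have /(congr1 fst) /= phi1M := phiM 1 1; rewrite mulg1 in phi1M.
    by rewrite !big_ord0; apply: (mulgI (phi 1).1); rewrite mulg1 -phi1M.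
  by rewrite !big_ord_recr /= phiM /= IH // phiS.
exists (fun w => (phi w).2 1) => w s Ss.
by rewrite phiM /= (phiS s Ss) !ffunE mul1g phi1.
Qed.

End Potential.

Lemma conjg_mul_invol (gT : finGroupType) (w s : gT) :
  s * s = 1 -> w * s * s * (w * s)^-1 = w * s * w^-1.
Proof.
by move=> ss1; rewrite invMg (invg_involution ss1) !mulgA -(mulgA (w * s)) ss1 mulg1.
Qed.

Lemma coxeter_wall_parity (gT : finGroupType) (S : {set gT}) :
  coxeter_system S ->
  exists par : gT -> gT -> bool, forall r w, {in S, forall s,
    par r (w * s) = par r w (+) (w * s * w^-1 == r)}.
Proof.
move=> cox; have S_invol := coxeter_invol cox.
pose d w s : {ffun gT -> bool} := [ffun r => w * s * w^-1 == r].
have [||P PM] := coxeter_potential cox (d := d).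
- by move=> w s Ss; apply/ffunP => r; rewrite !ffunE conjg_mul_invol ?S_invol.
- move=> w s t Ss St; have [ss1 tt1] := (S_invol s Ss, S_invol t St).
  have wall j : d (w * alt s t j) (letter s t j) =
      [ffun r => w * ((s * t) ^+ j * s) * w^-1 == r].
    apply/ffunP => r; rewrite !ffunE -(alt_conj_letter ss1 tt1) invMg.
    by rewrite !mulgA.
  rewrite -addnn big_split_ord /=.
  under [X in (_ + X)%R]eq_bigr => i _ do rewrite wall expgD expg_order mul1g -wall.
  by apply/ffunP => r; rewrite !ffunE; apply: addbb.
by exists (fun r w => P w r) => r w s Ss; rewrite PM // !ffunE.
Qed.

Section WallParity.

Variables (gT : finGroupType) (S : {set gT}) (par : gT -> gT -> bool).
Hypotheses (S_invol : {in S, forall s, s * s = 1})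
  (parityM : forall r w, {in S, forall s,
     par r (w * s) = par r w (+) (w * s * w^-1 == r)}).

Lemma parity_deletion r w l : all (mem S) l ->
  par r (w * \prod_(x <- l) x) != par r w ->
  exists2 l', all (mem S) l' &
    size l' < size l /\ \prod_(x <- l') x = w^-1 * r * w * \prod_(x <- l) x.
Proof.
elim: l w => [|x l IH] w; first by rewrite big_nil mulg1 eqxx.
rewrite /= big_cons mulgA => /andP [Sx Sl] par_ne.
case: (eqVneq (par r (w * x * \prod_(y <- l) y)) (par r (w * x))) => [par_eq|].
  move: par_ne; rewrite par_eq parityM //.
  case: (boolP (_ == r)) => [/eqP wall_x _ | _]; last first.
    by rewrite addbF eqxx.
  exists l => //; split=> //; rewrite -wall_x !mulgA mulVg mul1g mulgKV.
  by rewrite S_invol // mul1g.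
case/(IH _ Sl) => l' Sl' [lt_l' l'_prod]; exists (x :: l'); first by rewrite /= Sx.
by split=> //; rewrite !big_cons l'_prod invMg !mulgA mulgV mul1g.
Qed.

Hypothesis genS : <<S>> = [set: gT].

Lemma separating_wall_shortens r w0 z : par r w0 != par r z ->
  coxlen S (w0^-1 * (r * z)) < coxlen S (w0^-1 * z).
Proof.
move=> par_ne; have [l [Sl l_prod <-]] := coxlen_word genS (w0^-1 * z).
have z_eq : z = w0 * \prod_(x <- l) x by rewrite l_prod mulKVg.
have [|l' Sl' [lt_l' l'_prod]] := parity_deletion Sl (w := w0) (r := r).
  by rewrite -z_eq eq_sym.
apply: leq_ltn_trans lt_l'; rewrite -(_ : \prod_(x <- l') x = w0^-1 * (r * z)).
  exact: coxlen_le.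
by rewrite l'_prod z_eq !mulgA.
Qed.

Lemma orient_to_parity w0 w s : s \in S ->
  orient_to S w0 w s = (par (w * s * w^-1) w0 != par (w * s * w^-1) w).
Proof.
move=> Ss; rewrite /orient_to; set r := w * s * w^-1.
have r_w : r * w = w * s by rewrite /r mulgKV.
case: (boolP (par r w0 != par r w)) => [par_ne | /negPn/eqP par_eq].
  by have := separating_wall_shortens par_ne; rewrite r_w mulgA.
have r_ws : r * (w * s) = w by rewrite mulgA r_w -mulgA S_invol // mulg1.
have par_ne : par r w0 != par r (w * s).
  by rewrite parityM // par_eq eqxx addbT; case: (par r w).
have := separating_wall_shortens par_ne; rewrite r_ws !mulgA => lt_w.
by apply/negbTE; rewrite -leqNgt ltnW.
Qed.

Lemma parity_gate (R : {pred gT}) w0 p :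
  (forall x, x \in R -> coxlen S (w0^-1 * p) <= coxlen S (w0^-1 * x)) ->
  forall r, r * p \in R -> par r w0 = par r p.
Proof.
move=> p_min r rp_R; apply/eqP; apply: contraT => /separating_wall_shortens.
by rewrite ltnNge p_min.
Qed.

End WallParity.

Section Orientation.

Variables (gT : finGroupType) (S : {set gT}) (o : gT -> gT -> bool).
Hypothesis orient : is_orientation S o.

Lemma orientation_flip w s : s \in S -> o (w * s) s = ~~ o w s.
Proof. by case: orient => flip _; apply: flip. Qed.

Lemma orientation_alt_rev w s t i : s \in S -> t \in S -> i < #[s * t] ->
  o (w * alt t s (#[s * t].-1 - i)) (letter t s (#[s * t].-1 - i)) =
  o (w * alt s t i) (letter s t i).
Proof.
case: orient => _ rank2 Ss St lt_i; have lt_j : #[s * t].-1 - i < #[s * t] by lia.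
have [k le_k [shape | shape]] := rank2 s t w Ss St;
  have [/= -> _] := shape i lt_i; have [/= _ ->] := shape _ lt_j; lia.
Qed.

Lemma orientation_sink_alt w s t i : s \in S -> t \in S ->
  o w s = false -> o w t = false -> i < #[s * t] ->
  o (w * alt s t i) (letter s t i) = false.
Proof.
case: orient => _ rank2 Ss St ows owt lt_i; have m_gt0 := order_gt0 (s * t).
have [k le_k [shape | shape]] := rank2 s t w Ss St;
  have [/= A0 B0] := shape 0 m_gt0; rewrite mulg1 ?ows ?owt in A0 B0;
  have [/= -> _] := shape i lt_i; lia.
Qed.

Hypothesis cox : coxeter_system S.

Lemma orientation_potential : exists h : gT -> int, forall w, {in S, forall s,
  h (w * s)%g = h w + (if o w s then -1 else 1)}%R.
Proof.
have S_invol := coxeter_invol cox.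
pose d w s : int := (if o w s then -1 else 1)%R.
have [||h hM] := coxeter_potential cox (d := d); last by exists h.
- by move=> w s Ss; rewrite /d orientation_flip //; case: (o w s).
move=> w s t Ss St; have [ss1 tt1] := (S_invol s Ss, S_invol t St).
have d_rev (i : 'I_#[s * t]) :
    d (w * alt s t (#[s * t] + i)) (letter s t (#[s * t] + i)) =
    (- d (w * alt s t i)%g (letter s t i))%R.
  have lt_i := ltn_ord i; have Su : letter t s (#[s * t].-1 - i) \in S by case: odd.
  rewrite (alt_add_rev ss1 tt1 (expg_order _)) // letter_add_rev // mulgA.
  by rewrite /d orientation_flip ?orientation_alt_rev //; case: (o _ _).
rewrite -addnn big_split_ord /=.
by under [X in (_ + X)%R]eq_bigr => i _ do rewrite d_rev; rewrite sumrN addrN.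
Qed.

Lemma orientation_sink : exists w0, {in S, forall s, o w0 s = false}.
Proof.
have [h hM] := orientation_potential.
have [w0 _ w0_min] := Order.TotalTheory.arg_minP h (isT : xpredT 1).
exists w0 => s Ss; apply/negbTE/negP => ow0s.
by have := w0_min (w0 * s) isT; rewrite hM // ow0s; lia.
Qed.

End Orientation.

Section Residue.

Variables (gT : finGroupType) (S : {set gT}) (o : gT -> gT -> bool).
Variable par : gT -> gT -> bool.
Hypotheses (orient : is_orientation S o) (S_invol : {in S, forall s, s * s = 1})
  (parityM : forall r w, {in S, forall s,
     par r (w * s) = par r w (+) (w * s * w^-1 == r)}).
Variables (p s t : gT).
Hypotheses (Ss : s \in S) (St : t \in S).

Let ss1 : s * s = 1. Proof. exact: S_invol. Qed.
Let tt1 : t * t = 1. Proof. exact: S_invol. Qed.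

Lemma conjg_alt_letter j :
  p * alt s t j * letter s t j * (p * alt s t j)^-1 = p * ((s * t) ^+ j * s) * p^-1.
Proof. by rewrite -(alt_conj_letter ss1 tt1) invMg !mulgA. Qed.

Lemma parity_alt k i : k < #[s * t] -> i <= (#[s * t]).*2 ->
  par (p * ((s * t) ^+ k * s) * p^-1) (p * alt s t i) =
  par (p * ((s * t) ^+ k * s) * p^-1) p (+) (k < i <= k + #[s * t]).
Proof.
move=> lt_k; elim: i => [|i IH] lt_i; first by rewrite mulg1 addbF.
have Su : letter s t i \in S by case: odd.
rewrite [alt s t i.+1]/= (mulgA p (alt s t i)) parityM // IH ?(ltnW lt_i) //.
rewrite conjg_alt_letter.
rewrite (can_eq (mulgK _)) (can_eq (mulKg _)) (can_eq (mulgK _)).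
rewrite eq_expg_mod_order -addbA; congr (_ (+) _).
have := order_gt0 (s * t); move: lt_i lt_k; rewrite -addnn; move: #[s * t] => m.
move=> lt_i lt_k m_gt0; rewrite (modn_small lt_k).
case: (ltnP i m) => [lt_im | le_mi]; first by rewrite modn_small //; lia.
by rewrite -(subnK le_mi) modnDr modn_small; lia.
Qed.

Hypotheses (sink_s : o p s = false) (sink_t : o p t = false).

Lemma sink_alt_orientation j : j < (#[s * t]).*2 ->
  o (p * alt s t j) (letter s t j) = (#[s * t] <= j).
Proof.
move=> lt_j; case: (ltnP j #[s * t]) => [lt_jm | le_mj].
  by rewrite (orientation_sink_alt orient).
have [i lt_i ->] : exists2 i, i < #[s * t] & j = #[s * t] + i.
  by exists (j - #[s * t]); [rewrite -addnn in lt_j; lia | rewrite subnKC].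
have Su : letter t s (#[s * t].-1 - i) \in S by case: odd.
rewrite (alt_add_rev ss1 tt1 (expg_order _)) // letter_add_rev // mulgA.
rewrite (orientation_flip orient) // (orientation_alt_rev orient) //.
by rewrite (orientation_sink_alt orient).
Qed.

Lemma sink_alt_parity j : j < (#[s * t]).*2 ->
  let r := p * alt s t j * letter s t j * (p * alt s t j)^-1 in
  (par r p != par r (p * alt s t j)) = (#[s * t] <= j).
Proof.
move=> lt_j /=; have m_gt0 := order_gt0 (s * t).
rewrite conjg_alt_letter -expg_mod_order (parity_alt (ltn_pmod _ m_gt0) (ltnW lt_j)).
suff -> : (j %% #[s * t] < j <= j %% #[s * t] + #[s * t]) = (#[s * t] <= j).
  by case: (par _ p); case: (_ <= j).
move: lt_j; rewrite -addnn; move: #[s * t] m_gt0 => m m_gt0 lt_j.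
case: (ltnP j m) => [lt_jm | le_mj]; first by rewrite modn_small //; lia.
by rewrite -(subnK le_mj) modnDr modn_small; lia.
Qed.

Lemma sink_alt_orientation_parity j : j < (#[s * t]).*2 ->
  let x := p * alt s t j in let r := x * letter s t j * x^-1 in
  o x (letter s t j) = (par r p != par r x).
Proof. by move=> lt_j; rewrite /= sink_alt_orientation ?sink_alt_parity. Qed.

Lemma sink_residue_orientation x : p^-1 * x \in <<[set s; t]>> ->
  o x s = (par (x * s * x^-1) p != par (x * s * x^-1) x).
Proof.
case/(mem_gen2_alt ss1 tt1) => j lt_j alt_j.
have {x alt_j}-> : x = p * alt s t j by rewrite -alt_j mulKVg.
case/boolP: (odd j) => [odd_j | even_j]; last first.
  by have := sink_alt_orientation_parity lt_j; rewrite /= (negbTE even_j).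
case: j odd_j lt_j => // j /= /negbTE even_j lt_j.
rewrite even_j mulgA (orientation_flip orient) // parityM // conjg_mul_invol //.
have := sink_alt_orientation_parity (ltnW lt_j); rewrite /= even_j => ->.
by rewrite eqxx addbT; case: (par _ p); case: (par _ (p * alt s t j)).
Qed.

End Residue.

Section OrientationTowardsSink.

Variables (gT : finGroupType) (S : {set gT}) (o : gT -> gT -> bool).
Variables (par : gT -> gT -> bool) (w0 : gT).
Hypotheses (cox : coxeter_system S) (orient : is_orientation S o)
  (parityM : forall r w, {in S, forall s,
     par r (w * s) = par r w (+) (w * s * w^-1 == r)})
  (w0_sink : {in S, forall s, o w0 s = false}).

Lemma orientation_parity y :
  {in S, forall s, o y s = (par (y * s * y^-1) w0 != par (y * s * y^-1) y)}.
Proof.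
have [genS _ _] := cox; have S_invol := coxeter_invol cox.
have [n] := ubnP (coxlen S (w0^-1 * y)); elim: n y => // n IH y lt_y s Ss.
have [->|y_ne] := eqVneq y w0; first by rewrite w0_sink ?eqxx.
have [|t St lt_yt] := coxlen_descent genS S_invol (x := w0^-1 * y).
  by rewrite -eq_mulVg1 eq_sym.
pose D := <<[set s; t]>>.
have y_R : y \in y *: D by rewrite -{1}[y]mulg1 mem_lcoset mulKg group1.
have [p p_R p_min] := arg_minnP (fun x => coxlen S (w0^-1 * x)) y_R.
have gate := parity_gate S_invol parityM genS p_min.
have D_R x : x \in D -> p * x \in y *: D.
  by move=> x_D; rewrite mem_lcoset mulgA groupM // -mem_lcoset.
have [s_D t_D] : s \in D /\ t \in D by split; apply: mem_gen; rewrite !inE eqxx ?orbT.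
have lt_p : coxlen S (w0^-1 * p) < n.
  have yt_R : y * t \in y *: D by rewrite mem_lcoset mulKg.
  by apply: leq_ltn_trans (p_min _ yt_R) _; rewrite mulgA (leq_trans lt_yt).
have sink_p u : u \in D -> u \in S -> o p u = false.
  by move=> u_D u_S; rewrite (IH p) // gate ?eqxx // mulgKV D_R.
rewrite (sink_residue_orientation orient S_invol parityM (p := p) Ss St) ?sink_p //.
  by rewrite gate // mem_lcoset !mulgA mulVg mul1g -mulgA groupM // -mem_lcoset.
by rewrite -[_ * y]invgK invMg invgK groupV -mem_lcoset.
Qed.

End OrientationTowardsSink.

Theorem lemma2p5p13 (gT : finGroupType) (S : {set gT})
  (o : gT -> gT -> bool) :
  coxeter_system S -> is_orientation S o ->
  exists w0 : gT, forall w, {in S, forall s, o w s = orient_to S w0 w s}.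
Proof.
move=> cox orient; have [genS _ _] := cox.
have [par parityM] := coxeter_wall_parity cox.
have [w0 w0_sink] := orientation_sink orient cox.
exists w0 => w s Ss.
rewrite (orient_to_parity (coxeter_invol cox) parityM genS) //.
exact: (orientation_parity cox orient parityM w0_sink).
Qed.
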